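(* Let $P$ be a finite set of points in the plane in general position (no three collinear) with $|P|$ even. Then $P$ has at most one pairwise crossing perfect matching.
   Context: A perfect matching on $P$ is a partition of $P$ into pairs, each pair $\{a,b\}$ regarded as the straight-line segment $ab$. A perfect matching is pairwise crossing if every two of its segments cross each other. *)

From mathcomp Require Import all_boot all_order all_algebra.
Set Implicit Arguments. Unset Strict Implicit. Unset Printing Implicit Defensive.
Import Order.TTheory GRing.Theory Num.Theory.
Local Open Scope ring_scope.

Definition pt (R : realFieldType) := (R * R)%type.

Definition collinear (R : realFieldType) (a b c : pt R) : Prop :=
  (b.1 - a.1) * (c.2 - a.2) - (b.2 - a.2) * (c.1 - a.1) = 0.

(* The finite point set P is indexed by a finite type T through an injective
   map p; general position: no three distinct points collinear. *)
Definition general_position (R : realFieldType) (T : finType) (p : T -> pt R) : Prop :=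
  forall a b c : T, a != b -> b != c -> a != c -> ~ collinear (p a) (p b) (p c).

Definition on_segment (R : realFieldType) (a b x : pt R) : Prop :=
  exists t : R, [/\ 0 <= t, t <= 1 &
    x = ((1 - t) * a.1 + t * b.1, (1 - t) * a.2 + t * b.2)].

Definition segments_cross (R : realFieldType) (a b c d : pt R) : Prop :=
  exists x : pt R, on_segment a b x /\ on_segment c d x.

Definition perfect_matching (T : finType) (M : {set {set T}}) : Prop :=
  partition M [set: T] /\ (forall e, e \in M -> #|e| = 2%N).

Definition pair_segment_cross (R : realFieldType) (T : finType) (p : T -> pt R)
  (e f : {set T}) : Prop :=
  exists a b c d : T, [/\ e = [set a; b], f = [set c; d] &
    segments_cross (p a) (p b) (p c) (p d)].

Definition pairwise_crossing (R : realFieldType) (T : finType) (p : T -> pt R)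
  (M : {set {set T}}) : Prop :=
  perfect_matching M /\
  forall e f, e \in M -> f \in M -> e != f -> pair_segment_cross p e f.

From mathcomp Require Import all_boot all_order all_algebra.
From mathcomp Require Import zify ring lra.
Set Implicit Arguments. Unset Strict Implicit. Unset Printing Implicit Defensive.
Import Order.TTheory GRing.Theory Num.Theory.

(* Let b and b' be the partners of a point a in two pairwise crossing perfect
   matchings M1 and M2, and suppose b' lies strictly left of the line ab.
   Every other segment of M1 crosses ab, so its endpoints lie strictly on
   opposite sides of the line ab; hence the left of ab has at most as many
   points as the right.  Conversely, send a point x right of ab to its
   M1-partner if x is left of ab', and to its M2-partner otherwise.  Either
   way the image lies left of ab and on the other side of ab' than x: a
   segment crossing ab (resp. ab') cannot lie entirely on the side of the
   other line away from b (resp. b').  This injects the right of ab into the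
   left of ab minus b', a contradiction.  So b' lies on the line ab, and
   b = b' by general position. *)

Section Orientation.

Variable R : realFieldType.
Local Open Scope ring_scope.
Implicit Types (a b c x y z : pt R) (s t u v : R).

Definition orient a b c : R :=
  (b.1 - a.1) * (c.2 - a.2) - (b.2 - a.2) * (c.1 - a.1).

Lemma orient_fst a b : orient a b a = 0.
Proof. by rewrite /orient; ring. Qed.

Lemma orient_snd a b : orient a b b = 0.
Proof. by rewrite /orient; ring. Qed.

Lemma orient_swap a b c : orient a c b = - orient a b c.
Proof. by rewrite /orient; ring. Qed.

Lemma orient_on_segment a b x y z : on_segment x y z ->
  exists2 t, 0 <= t <= 1 & orient a b z = (1 - t) * orient a b x + t * orient a b y.
Proof.
by move=> [t [t0 t1 ->]]; exists t; [rewrite t0 t1 | rewrite /orient /=; ring].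
Qed.

Lemma convex_root_mul_lt0 s u v : 0 <= s <= 1 -> (1 - s) * u + s * v = 0 ->
  u != 0 -> v != 0 -> u * v < 0.
Proof.
move=> /andP[s0 s1] root u0 v0; rewrite ltNge; apply/negP => uv0.
have uu : 0 < u * u by rewrite -expr2 exprn_even_gt0.
have s_eq1 : s = 1 by nra.
by move: root; rewrite s_eq1 subrr mul0r add0r mul1r; apply/eqP.
Qed.

Lemma on_segmentC a b x : on_segment a b x -> on_segment b a x.
Proof.
move=> [t [t0 t1 ->]]; exists (1 - t); split; [lra | lra | congr (_, _); ring].
Qed.

Lemma segments_crossCl a b x y : segments_cross a b x y -> segments_cross b a x y.
Proof. by move=> [z [zab zxy]]; exists z; split=> //; apply: on_segmentC. Qed.

Lemma segments_crossCr a b x y : segments_cross a b x y -> segments_cross a b y x.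
Proof. by move=> [z [zab zxy]]; exists z; split=> //; apply: on_segmentC. Qed.

Lemma segments_cross_opposite a b x y : segments_cross a b x y ->
  orient a b x != 0 -> orient a b y != 0 -> orient a b x * orient a b y < 0.
Proof.
move=> [z [/(orient_on_segment a b) [s _ zab] /(orient_on_segment a b) [t t01 zxy]]].
rewrite orient_fst orient_snd !mulr0 addr0 in zab.
by apply: convex_root_mul_lt0 t01 _; rewrite -zxy.
Qed.

(* The crossing point lies on the segment from a towards b, hence weakly on
   b's side of any line through a; being a convex combination of x and y, it
   forces one of them strictly to that side unless it is a itself. *)
Lemma segments_cross_same_side a b c x y : segments_cross a b x y ->
  orient x y a != 0 -> orient a c b != 0 ->
  0 < orient a c b * orient a c x \/ 0 < orient a c b * orient a c y.
Proof.
move=> [z [[s [s0 s1 ez]] zxy]] xya_ncol k_neq0.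
apply/orP; rewrite !ltNge -negb_and; apply/negP=> /andP[kx ky].
have kk : 0 < orient a c b * orient a c b by rewrite -expr2 exprn_even_gt0.
have [t /andP[t0 t1] zt] := orient_on_segment a c zxy.
have zs : orient a c z = s * orient a c b by rewrite ez /orient /=; ring.
have s_eq0 : s = 0 by nra.
have za : z = a by rewrite ez s_eq0 [RHS]surjective_pairing; congr (_, _); ring.
have [r _ zr] := orient_on_segment x y zxy.
by move: xya_ncol; rewrite -za zr orient_fst orient_snd !mulr0 addr0 eqxx.
Qed.

End Orientation.

Lemma leq_card_mapsto (T T' : finType) (f : T -> T') (A : {set T}) (B : {set T'}) :
  injective f -> {in A, forall x, f x \in B} -> #|A| <= #|B|.
Proof.
move=> f_inj fAB; rewrite -(card_imset _ f_inj); apply: subset_leq_card.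
by apply/subsetP=> _ /imsetP[x Ax ->]; apply: fAB.
Qed.

Lemma set2_eq (T : finType) (a b c d : T) : a != b -> [set a; b] = [set c; d] ->
  (c, d) = (a, b) \/ (c, d) = (b, a).
Proof.
move=> ab eab.
have : c != d by move: (cards2 c d); rewrite -eab cards2 ab; case: (c != d).
have /set2P[->|->] : c \in [set a; b] by rewrite eab set21.
  have /set2P[->|->] : d \in [set a; b] by rewrite eab set22.
    by rewrite eqxx.
  by left.
have /set2P[->|->] : d \in [set a; b] by rewrite eab set22.
  by right.
by rewrite eqxx.
Qed.

Definition partner (T : finType) (M : {set {set T}}) (x : T) : T :=
  odflt x [pick y in pblock M x | y != x].

Section Partner.

Variables (T : finType) (M : {set {set T}}).
Hypothesis pmM : perfect_matching M.

Lemma mem_cover_matching x : x \in cover M.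
Proof. by case: pmM => /and3P[/eqP -> _ _] _; rewrite inE. Qed.

Lemma partner_in_pblock x : partner M x \in pblock M x /\ partner M x != x.
Proof.
rewrite /partner; case: pickP => [y /andP[] // | no_other].
have : pblock M x \subset [set x].
  apply/subsetP=> y y_x; rewrite inE; apply: contraFT (no_other y) => yx.
  by rewrite y_x.
move/subset_leq_card; rewrite pmM.2 ?pblock_mem ?mem_cover_matching //.
by rewrite cards1.
Qed.

Lemma partner_neq x : partner M x != x.
Proof. by case: (partner_in_pblock x). Qed.

Lemma pblock_partner x : pblock M x = [set x; partner M x].
Proof.
have [px_x px_neq] := partner_in_pblock x.
apply/esym/eqP; rewrite eqEcard subUset !sub1set px_x mem_pblock mem_cover_matching.
by rewrite cards2 eq_sym px_neq pmM.2 ?pblock_mem ?mem_cover_matching.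
Qed.

Lemma partnerK : involutive (partner M).
Proof.
move=> x; have : partner M (partner M x) \in pblock M x.
  have tiM : trivIset M by case: pmM => /and3P[].
  rewrite -(same_pblock tiM (proj1 (partner_in_pblock x))).
  exact: (proj1 (partner_in_pblock _)).
by rewrite pblock_partner => /set2P[// | /eqP]; rewrite (negbTE (partner_neq _)).
Qed.

Lemma partner_inj : injective (partner M).
Proof. exact: inv_inj partnerK. Qed.

Lemma partner_neq_pair a x : x != a -> x != partner M a ->
  partner M x != a /\ partner M x != partner M a.
Proof.
move=> xa xpa; rewrite (inj_eq partner_inj) xa.
by split=> //; apply: contraNneq xpa => <-; rewrite partnerK.
Qed.

End Partner.

Lemma perfect_matching_eq (T : finType) (M1 M2 : {set {set T}}) :
  perfect_matching M1 -> perfect_matching M2 -> partner M1 =1 partner M2 -> M1 = M2.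
Proof.
move=> pm1 pm2 eq_partner.
rewrite -(preim_partition_pblock pm1.1) -(preim_partition_pblock pm2.1).
apply: eq_imset => x; apply/setP => y.
by rewrite !inE !pblock_partner // !eq_partner.
Qed.

Section CrossingMatchings.

Variables (R : realFieldType) (T : finType) (p : T -> pt R).
Local Open Scope ring_scope.

Lemma pair_segment_crossE a a' x x' : a != a' -> x != x' ->
  pair_segment_cross p [set a; a'] [set x; x'] ->
  segments_cross (p a) (p a') (p x) (p x').
Proof.
move=> aa' xx' [c [d [c' [d' [/(set2_eq aa') ecd /(set2_eq xx') ecd' cross]]]]].
have cross_a : segments_cross (p a) (p a') (p c') (p d').
  by case: ecd cross => -[-> ->] //; apply: segments_crossCl.
by case: ecd' cross_a => -[-> ->] //; apply: segments_crossCr.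
Qed.

Hypothesis gp : general_position p.

Lemma orient_neq0 a b c : a != b -> b != c -> a != c -> orient (p a) (p b) (p c) != 0.
Proof. by move=> ab bc ac; apply/eqP; apply: gp. Qed.

Lemma orient_neq0_neq a b x : orient (p a) (p b) (p x) != 0 -> x != a /\ x != b.
Proof.
by move=> abx; split; apply: contraNneq abx => ->; rewrite ?orient_fst ?orient_snd.
Qed.

Section OneMatching.

Variable M : {set {set T}}.
Hypothesis pcM : pairwise_crossing p M.

Lemma partner_cross a x : x != a -> x != partner M a ->
  segments_cross (p a) (p (partner M a)) (p x) (p (partner M x)).
Proof.
move=> xa xpa; have [pmM crossM] := pcM.
have x_notin : x \notin pblock M a by rewrite pblock_partner // !inE negb_or xa.
have blocks_neq : pblock M a != pblock M x.
  by apply: contraNneq x_notin => ->; rewrite mem_pblock mem_cover_matching.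
have := crossM _ _ (pblock_mem (mem_cover_matching pmM a))
  (pblock_mem (mem_cover_matching pmM x)) blocks_neq.
rewrite !pblock_partner //.
by apply: pair_segment_crossE; rewrite eq_sym partner_neq.
Qed.

Lemma partner_opposite_side a x : x != a -> x != partner M a ->
  orient (p a) (p (partner M a)) (p x) *
  orient (p a) (p (partner M a)) (p (partner M x)) < 0.
Proof.
move=> xa xpa; have [pxa pxpa] := partner_neq_pair pcM.1 xa xpa.
have apa : a != partner M a by rewrite eq_sym (partner_neq pcM.1).
apply: segments_cross_opposite (partner_cross xa xpa) _ _; apply: orient_neq0;
  by rewrite // eq_sym.
Qed.

Lemma partner_same_side a c x : x != a -> x != partner M a ->
  orient (p a) (p c) (p (partner M a)) != 0 ->
  0 < orient (p a) (p c) (p (partner M a)) * orient (p a) (p c) (p x) \/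
  0 < orient (p a) (p c) (p (partner M a)) * orient (p a) (p c) (p (partner M x)).
Proof.
move=> xa xpa; have [pxa _] := partner_neq_pair pcM.1 xa xpa.
apply: segments_cross_same_side (partner_cross xa xpa) _.
by apply: orient_neq0; rewrite // eq_sym (partner_neq pcM.1).
Qed.

End OneMatching.

Lemma orient_partners_le0 M1 M2 a :
  pairwise_crossing p M1 -> pairwise_crossing p M2 ->
  orient (p a) (p (partner M1 a)) (p (partner M2 a)) <= 0.
Proof.
move=> pc1 pc2; rewrite leNgt; apply/negP.
set b := partner M1 a; set b' := partner M2 a => b'_left1.
pose o1 x := orient (p a) (p b) (p x); pose o2 x := orient (p a) (p b') (p x).
pose L1 := [set x | 0 < o1 x]; pose R1 := [set x | o1 x < 0].
pose L2 := [set x | 0 < o2 x].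
have ab' : a != b' by rewrite eq_sym (partner_neq pc2.1).
have L1_R1 : (#|L1| <= #|R1|)%N.
  apply: (leq_card_mapsto (partner_inj pc1.1)) => x; rewrite !inE => x_left1.
  have [xa xb] := orient_neq0_neq (lt0r_neq0 x_left1).
  by rewrite -(pmulr_rlt0 _ x_left1) partner_opposite_side.
have R1L2_L1 : (#|R1 :&: L2| <= #|L1 :\: L2 :\ b'|)%N.
  apply: (leq_card_mapsto (partner_inj pc1.1)) => x.
  rewrite !inE => /andP[x_right1 x_left2].
  have [xa xb] := orient_neq0_neq (ltr0_neq0 x_right1).
  have y_left1 : 0 < o1 (partner M1 x).
    by rewrite -(nmulr_rlt0 _ x_right1) partner_opposite_side.
  have b_right2 : o2 b < 0 by rewrite /o2 orient_swap oppr_lt0.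
  have y_right2 : o2 (partner M1 x) < 0.
    case: (partner_same_side pc1 xa xb (ltr0_neq0 b_right2)).
      by rewrite (nmulr_rgt0 _ b_right2) => /lt_trans/(_ x_left2); rewrite ltxx.
    by rewrite (nmulr_rgt0 _ b_right2).
  rewrite y_left1 -leNgt (ltW y_right2) !andbT.
  by apply: contraTneq y_right2 => ->; rewrite /o2 orient_snd ltxx.
have R1L2c_L1 : (#|R1 :\: L2| <= #|L1 :&: L2|)%N.
  apply: (leq_card_mapsto (partner_inj pc2.1)) => x.
  rewrite !inE -leNgt => /andP[x_nleft2 x_right1].
  have [xa _] := orient_neq0_neq (ltr0_neq0 x_right1).
  have xb' : x != b'.
    by apply: contraTneq x_right1 => ->; rewrite -leNgt ltW.
  have x_right2 : o2 x < 0.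
    by rewrite lt_neqAle x_nleft2 andbT (orient_neq0 ab') // eq_sym.
  have y_left2 : 0 < o2 (partner M2 x).
    by rewrite -(nmulr_rlt0 _ x_right2) partner_opposite_side.
  have y_left1 : 0 < o1 (partner M2 x).
    case: (partner_same_side pc2 xa xb' (lt0r_neq0 b'_left1)).
      by rewrite (pmulr_rgt0 _ b'_left1) => /lt_trans/(_ x_right1); rewrite ltxx.
    by rewrite (pmulr_rgt0 _ b'_left1).
  by rewrite y_left1 y_left2.
have b'_L1 : b' \in L1 :\: L2 by rewrite !inE b'_left1 /o2 orient_snd ltxx.
have := cardsID L2 R1; have := cardsID L2 L1; have := cardsD1 b' (L1 :\: L2).
rewrite b'_L1; lia.
Qed.

Lemma partner_unique M1 M2 :
  pairwise_crossing p M1 -> pairwise_crossing p M2 -> partner M1 =1 partner M2.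
Proof.
move=> pc1 pc2 a; apply/eqP; apply: contraT => b_neq_b'.
have : orient (p a) (p (partner M1 a)) (p (partner M2 a)) == 0.
  rewrite eq_le orient_partners_le0 // -oppr_le0 -orient_swap.
  exact: orient_partners_le0.
have ab : a != partner M1 a by rewrite eq_sym (partner_neq pc1.1).
have ab' : a != partner M2 a by rewrite eq_sym (partner_neq pc2.1).
by rewrite (negbTE (orient_neq0 ab b_neq_b' ab')).
Qed.

End CrossingMatchings.

Theorem theorem8 (R : realFieldType) (T : finType) (p : T -> pt R) :
  injective p -> general_position p -> ~~ odd #|T| ->
  forall M1 M2 : {set {set T}},
    pairwise_crossing p M1 -> pairwise_crossing p M2 -> M1 = M2.
Proof.
move=> _ gp _ M1 M2 pc1 pc2.
exact: perfect_matching_eq pc1.1 pc2.1 (partner_unique gp pc1 pc2).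
Qed.
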